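(* In the nondeterministic Outcome Logic instance, for every program $C$ (terminating after finitely many steps) and atomic assertions $P,Q$: \[ \not\vDash\{P\}\,C\,\{Q\} \quad\text{iff}\quad \exists\varphi.\ \varphi\Rightarrow P,\ \mathsf{sat}(\varphi),\ \text{and}\ \vDash\langle\varphi\rangle\,C\,\langle\overline{Q}\oplus\top\rangle . \]
   Context: Nondeterministic instance: powerset monad ($\mathsf{bind}(S,k)=\bigcup_{x\in S}k(x)$, $\mathsf{unit}(x)=\{x\}$, monoid $\cup,\emptyset$). Programs $C::=\mathbb{0}\mid\mathbb{1}\mid C_1;C_2\mid C_1+C_2\mid C^\star\mid c$ with semantics $[\![C]\!]\colon\Sigma\to2^\Sigma$: $[\![\mathbb{0}]\!](\sigma)=\emptyset$, $[\![\mathbb{1}]\!](\sigma)=\{\sigma\}$, sequencing by union over intermediate states, $+$ by union, $C^\star$ as the least fixed point of $f\mapsto\lambda\sigma.f^\dagger([\![C]\!](\sigma))\cup\{\sigma\}$ with $f^\dagger(S)=\bigcup_{\sigma\in S}f(\sigma)$. Atomic commands are $\mathsf{assume}\ e$ and deterministic commands such as $x:=e$ (as in the paper's guarded command languages). Atomic assertions carry a state relation $\vDash_\Sigma$ and are closed under negation $\overline{Q}$ ($\sigma\vDash_\Sigma\overline{Q}$ iff $\sigma\not\vDash_\Sigma Q$); a set $S$ satisfies atomic $P$ iff $S\neq\emptyset$ and all its elements satisfy $P$. Outcome assertions use $\top,\bot,\top^\oplus$ (satisfied only by $\emptyset$), $\land$, $\Rightarrow$ (classical) and $\oplus$ ($S\vDash\varphi\oplus\psi$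 iff $S=S_1\cup S_2$, $S_1\vDash\varphi$, $S_2\vDash\psi$). $\vDash\langle\varphi\rangle C\langle\psi\rangle$ iff $S\vDash\varphi$ implies $[\![C]\!]^\dagger(S)\vDash\psi$ for all $S$. Hoare triple: $\vDash\{P\}C\{Q\}$ iff for all $\sigma\vDash_\Sigma P$ and $\tau\in[\![C]\!](\sigma)$, $\tau\vDash_\Sigma Q$. $\varphi\Rightarrow P$ means every set satisfying $\varphi$ satisfies $P$; $\mathsf{sat}(\varphi)$ means some set satisfies $\varphi$. *)

Set Implicit Arguments.

Section OL.
Variable Sigma : Type.

Definition pset := Sigma -> Prop.

Definition unit_p (s : Sigma) : pset := fun t => t = s.
Definition bind_p (S : pset) (k : Sigma -> pset) : pset :=
  fun t => exists x, S x /\ k x t.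
Definition union_p (A B : pset) : pset := fun t => A t \/ B t.
Definition empty_p : pset := fun _ => False.

(* Atomic commands: assume e, and deterministic commands (e.g. x := e),
   with expressions interpreted semantically. *)
Inductive atom : Type :=
| Assume (e : Sigma -> Prop)
| Det (f : Sigma -> Sigma).

Definition atom_sem (c : atom) : Sigma -> pset :=
  match c with
  | Assume e => fun s => fun t => e s /\ t = s
  | Det f => fun s => unit_p (f s)
  end.

Inductive cmd : Type :=
| CZero
| COne
| CSeq (C1 C2 : cmd)
| CPlus (C1 C2 : cmd)
| CStar (C : cmd)
| CAtom (c : atom).

(* Least fixed point (Knaster-Tarski: intersection of all prefixed points)
   of a functional on Sigma -> 2^Sigma ordered pointwise by inclusion. *)
Definition lfp (Phi : (Sigma -> pset) -> (Sigma -> pset)) : Sigma -> pset :=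
  fun s t => forall f : Sigma -> pset,
      (forall s' t', Phi f s' t' -> f s' t') -> f s t.

Definition star_F (c : Sigma -> pset) (f : Sigma -> pset) : Sigma -> pset :=
  fun s => union_p (bind_p (c s) f) (unit_p s).

Fixpoint sem (C : cmd) : Sigma -> pset :=
  match C with
  | CZero => fun _ => empty_p
  | COne => unit_p
  | CSeq C1 C2 => fun s => bind_p (sem C1 s) (sem C2)
  | CPlus C1 C2 => fun s => union_p (sem C1 s) (sem C2 s)
  | CStar C1 => lfp (star_F (sem C1))
  | CAtom c => atom_sem c
  end.

Definition aassn := Sigma -> Prop.
Definition aneg (Q : aassn) : aassn := fun s => ~ Q s.

Inductive oassn : Type :=
| OTop
| OBot
| OTopPlus
| OAnd (phi psi : oassn)
| OImp (phi psi : oassn)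
| OPlus (phi psi : oassn)
| OAtom (P : aassn).

Fixpoint osat (S : pset) (phi : oassn) : Prop :=
  match phi with
  | OTop => True
  | OBot => False
  | OTopPlus => forall x, ~ S x
  | OAnd p q => osat S p /\ osat S q
  | OImp p q => osat S p -> osat S q
  | OPlus p q => exists S1 S2 : pset,
      (forall x, S x <-> (S1 x \/ S2 x)) /\ osat S1 p /\ osat S2 q
  | OAtom P => (exists x, S x) /\ (forall x, S x -> P x)
  end.

Definition ol_valid (phi : oassn) (C : cmd) (psi : oassn) : Prop :=
  forall S : pset, osat S phi -> osat (bind_p S (sem C)) psi.

Definition hoare_valid (P : aassn) (C : cmd) (Q : aassn) : Prop :=
  forall s t, P s -> sem C s t -> Q t.

Definition entails_atom (phi : oassn) (P : aassn) : Prop :=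
  forall S, osat S phi -> osat S (OAtom P).

Definition satisfiable (phi : oassn) : Prop := exists S, osat S phi.

End OL.

Arguments CZero {Sigma}.
Arguments COne {Sigma}.
Arguments OTop {Sigma}.
Arguments OBot {Sigma}.
Arguments OTopPlus {Sigma}.

(* A Hoare triple fails exactly when some run from a P-state ends outside Q.
   Such a run s ~> t is recorded in outcome logic by the precondition
   "the state is s", since then the outcome set contains t, and an outcome
   set satisfies (not Q) (+) T precisely when it has a member outside Q.
   Conversely, a satisfiable phi entailing P supplies a nonempty set of
   P-states, and the outcome triple produces a run from one of them ending
   outside Q. *)
From Stdlib Require Import Classical.

Set Implicit Arguments.

Section NondeterministicOutcomeLogic.
Variable Sigma : Type.

Lemma not_hoare_valid_iff (P : aassn Sigma) (C : cmd Sigma) (Q : aassn Sigma) :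
  ~ hoare_valid P C Q <-> exists s t, P s /\ sem C s t /\ ~ Q t.
Proof.
  split.
  - intros Hnv.
    apply NNPP; intros Hnone; apply Hnv; intros s t Ps Cst.
    apply NNPP; intros Qt; apply Hnone.
    now exists s, t.
  - intros [s [t [Ps [Cst Qt]]]] Hv.
    exact (Qt (Hv s t Ps Cst)).
Qed.

Lemma osat_plus_atom_top (S : pset Sigma) (R : aassn Sigma) :
  osat S (OPlus (OAtom R) OTop) <-> exists x, S x /\ R x.
Proof.
  split.
  - intros [S1 [S2 [HS [[[x S1x] HR] _]]]].
    exists x; split; [apply HS; now left | now apply HR].
  - intros [x [Sx Rx]].
    exists (unit_p x), S; repeat split.
    + now right.
    + now intros [->|].
    + now exists x.
    + now intros y ->.
Qed.

Lemma entails_atom_sub (R P : aassn Sigma) :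
  (forall x, R x -> P x) -> entails_atom (OAtom R) P.
Proof.
  intros RP S [[x Sx] SR]; split.
  - now exists x.
  - intros y Sy; exact (RP y (SR y Sy)).
Qed.

Lemma satisfiable_atom (R : aassn Sigma) :
  (exists x, R x) -> satisfiable (OAtom R).
Proof. intros [x Rx]; exists R; split; [now exists x | auto]. Qed.

Lemma osat_unit_mem (S : pset Sigma) (s : Sigma) :
  osat S (OAtom (unit_p s)) -> S s.
Proof. intros [[x Sx] Hs]; now rewrite <- (Hs x Sx). Qed.

Lemma ol_valid_unit_run (C : cmd Sigma) (R : aassn Sigma) (s t : Sigma) :
  sem C s t -> R t -> ol_valid (OAtom (unit_p s)) C (OPlus (OAtom R) OTop).
Proof.
  intros Cst Rt S HS.
  apply osat_plus_atom_top.
  exists t; split; [exists s; split; [now apply osat_unit_mem | exact Cst] | exact Rt].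
Qed.

Lemma ol_valid_run (phi : oassn Sigma) (P : aassn Sigma) (C : cmd Sigma)
    (R : aassn Sigma) :
  entails_atom phi P -> satisfiable phi ->
  ol_valid phi C (OPlus (OAtom R) OTop) ->
  exists s t, P s /\ sem C s t /\ R t.
Proof.
  intros Hent [S HS] Hol.
  destruct (proj1 (osat_plus_atom_top _ _) (Hol S HS)) as [t [[s [Ss Cst]] Rt]].
  exists s, t; repeat split; [exact (proj2 (Hent S HS) s Ss) | exact Cst | exact Rt].
Qed.

End NondeterministicOutcomeLogic.

Theorem corollary5p7 (Sigma : Type) (C : cmd Sigma) (P Q : aassn Sigma) :
  ~ hoare_valid P C Q <->
  exists phi : oassn Sigma,
    entails_atom phi P /\ satisfiable phi /\
    ol_valid phi C (OPlus (OAtom (aneg Q)) OTop).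
Proof.
  rewrite not_hoare_valid_iff.
  split.
  - intros [s [t [Ps [Cst Qt]]]].
    exists (OAtom (unit_p s)); split; [|split].
    + apply entails_atom_sub; now intros x ->.
    + apply satisfiable_atom; now exists s.
    + now apply ol_valid_unit_run with t.
  - intros [phi [Hent [Hsat Hol]]].
    exact (ol_valid_run Hent Hsat Hol).
Qed.
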